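(* Let $\tau$ be a counterclockwise permutation for monotone linear functions $f_1,\dots,f_n$. Then the cyclic sequence $(f^{\tau_0},f^{\tau_1},\dots,f^{\tau_{n-1}})$ of composites of the shifts of $\tau$ is unimodal.
   Context: A linear function is $f(x)=ax+b$; monotone means $a>0$; identical means $f(x)=x$. $\vec f=(b,1-a)^\top$ and $\theta(f)\in[0,2\pi)$ is its polar angle ($\bot$ if $\vec f=0$). For a permutation $\sigma$ of $[n]$, $f^\sigma=f_{\sigma(n)}\circ\cdots\circ f_{\sigma(1)}$; all $f^\sigma$ have the same slope, so they are totally ordered by the pointwise order. $\sigma$ is counterclockwise if, after discarding positions $i$ with $f_{\sigma(i)}$ identical, there is $k$ with $\theta(f_{\sigma(k)})\le\cdots\le\theta(f_{\sigma(n)})\le\theta(f_{\sigma(1)})\le\cdots\le\theta(f_{\sigma(k-1)})$. The $k$-shift ($k=0,\dots,n-1$) is $\tau_k(i)=\tau(i+k)$ for $i\le n-k$ and $\tau_k(i)=\tau(i+k-n)$ otherwise ($\tau_0=\tau$). A cyclic sequence $(x_0,\dots,x_{n-1})$ in a totally ordered set (indices mod $n$) is unimodal if there are $k,\ell$ with $x_k\le x_{k+1}\le\cdots\le x_\ell\ge x_{\ell+1}\ge\cdots\ge x_{k-1}\ge x_k$. *)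

From HB Require Import structures.
From mathcomp Require Import all_boot all_order all_algebra all_fingroup.
From mathcomp Require Import reals trigo.
Set Implicit Arguments. Unset Strict Implicit. Unset Printing Implicit Defensive.
Import Order.TTheory GRing.Theory Num.Theory.
Local Open Scope ring_scope.

Section LinDefs.
Variable R : realType.
Variable n : nat.
(* The linear functions f_i(x) = a i * x + b i, indices 0-based ('I_n). *)
Variables (a b : 'I_n -> R).

Definition linf (i : 'I_n) (x : R) : R := a i * x + b i.

Definition monotone (i : 'I_n) : Prop := 0 < a i.

(* f_i is identical (f_i(x) = x), i.e. the vector (b, 1-a) is zero *)
Definition identical (i : 'I_n) : bool := (a i == 1) && (b i == 0).

(* polar angle in [0, 2 pi) of a nonzero vector (x, y) *)
Definition polar_angle (x y : R) : R :=
  let r := Num.sqrt (x ^+ 2 + y ^+ 2) in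
  if 0 <= y then acos (x / r) else 2 * pi - acos (x / r).

(* theta(f_i): polar angle of (b_i, 1 - a_i); only used for non-identical f_i *)
Definition theta (i : 'I_n) : R := polar_angle (b i) (1 - a i).

Definition perm_seq (s : 'S_n) : seq 'I_n := [seq s i | i <- enum 'I_n].

(* composite f_{s_last} o ... o f_{s_first} of the functions listed in s *)
Definition comp_seq (s : seq 'I_n) (x : R) : R := foldl (fun y i => linf i y) x s.

Definition fcomp (s : 'S_n) : R -> R := comp_seq (perm_seq s).

Definition counterclockwise (s : 'S_n) : Prop :=
  exists k : nat,
    sorted <=%R (rot k [seq theta i | i <- perm_seq s & ~~ identical i]).

(* the k-shift tau_k: tau_k(i) = tau(i + k mod n); as a sequence of values
   it is the left rotation by k of tau(1), ..., tau(n) *)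
Definition shift_seq (t : 'S_n) (k : nat) : seq 'I_n := rot k (perm_seq t).

Definition fshift (t : 'S_n) (k : nat) : R -> R := comp_seq (shift_seq t k).
End LinDefs.

Definition fle (R : realType) (f g : R -> R) : Prop := forall x, f x <= g x.

(* A cyclic sequence x_0, ..., x_{m-1} (indices mod m) in a set ordered by le
   is unimodal: there are k, l with x_k <= x_{k+1} <= ... <= x_l >= x_{l+1}
   >= ... >= x_{k-1} >= x_k.  Here l = k + j (mod m) with j < m. *)
Definition cyc_unimodal (T : Type) (le : T -> T -> Prop) (m : nat) (x : nat -> T) : Prop :=
  exists k j : nat, [/\ k < m, j < m,
    (forall i, i < j -> le (x ((k + i) %% m)%N) (x ((k + i).+1 %% m)%N)) &
    (forall i, j <= i < m -> le (x ((k + i).+1 %% m)%N) (x ((k + i) %% m)%N))]%N.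

From HB Require Import structures.
From mathcomp Require Import all_boot all_order all_algebra all_fingroup.
From mathcomp Require Import reals trigo.
From mathcomp Require Import ring lra zify.
Set Implicit Arguments. Unset Strict Implicit. Unset Printing Implicit Defensive.
Import Order.TTheory GRing.Theory Num.Theory.
Local Open Scope ring_scope.

(* All composites f^{τ_k} have the slope P = a_1 ⋯ a_n, so they are ordered
   like their values c_k = f^{τ_k}(0).  Passing from τ_k to τ_{k+1} moves the
   innermost function f(x) = a x + b to the outside, which gives
   c_{k+1} = a c_k + h b with h = 1 - P.  For a ≠ 1 put g = h b / (1 - a); then
   c_{k+1} - g = a (c_k - g) and c_{k+1} - c_k = (1 - a) (g - c_k).  On a
   counterclockwise run of vectors (b, 1 - a) inside one open half-plane, g is
   nonincreasing when h ≥ 0, so once c_k ≥ g this persists and the sequence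
   keeps descending (upper half-plane) or ascending (lower half-plane).  With a
   separate look at horizontal vectors, this excludes a descent, ascent,
   descent pattern in one turn; replacing c by -c handles h < 0, and a cyclic
   sequence without such a pattern is unimodal. *)

Section PolarAngle.
Variable R : realType.
Implicit Types x y : R.

Local Notation ncos x y := (x / Num.sqrt (x ^+ 2 + y ^+ 2)).

Lemma ncos_bounds x y : y != 0 -> -1 < ncos x y < 1.
Proof.
move=> y_neq0; have y2_gt0 : 0 < y ^+ 2 by rewrite exprn_even_gt0.
set r := Num.sqrt _.
have r_gt0 : 0 < r by rewrite sqrtr_gt0; nra.
have r2 : r ^+ 2 = x ^+ 2 + y ^+ 2 by rewrite sqr_sqrtr // addr_ge0 ?sqr_ge0.
by rewrite ltr_pdivrMr // ltr_pdivlMr //; apply/andP; split; nra.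
Qed.

Lemma ncos_itv x y : y != 0 -> -1 <= ncos x y <= 1.
Proof. by move=> /(@ncos_bounds x) /andP[lo hi]; rewrite !ltW. Qed.

Lemma polar_angle_upper x y : 0 < y -> 0 < polar_angle x y < pi.
Proof.
move=> y_gt0; have /andP[lo hi] := @ncos_bounds x y (lt0r_neq0 y_gt0).
by rewrite /polar_angle ltW // acos_gt0 ?ltW ?hi // acos_ltpi ?lo ?ltW.
Qed.

Lemma polar_angle_lower x y : y < 0 -> pi < polar_angle x y.
Proof.
move=> y_lt0; have /andP[lo hi] := @ncos_bounds x y (ltr0_neq0 y_lt0).
have := @acos_ltpi R (ncos x y); rewrite lo ltW //= /polar_angle leNgt y_lt0 /=; lra.
Qed.

Lemma polar_angle_posx x : 0 < x -> polar_angle x 0 = 0.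
Proof.
move=> x_gt0; rewrite /polar_angle lexx expr0n addr0 sqrtr_sqr gtr0_norm //.
by rewrite divff ?acos1 // gt_eqF.
Qed.

Lemma polar_angle_negx x : x < 0 -> polar_angle x 0 = pi.
Proof.
move=> x_lt0; rewrite /polar_angle lexx expr0n addr0 sqrtr_sqr ltr0_norm //.
by rewrite invrN mulrN divff ?acosN1 // lt_eqF.
Qed.

Lemma lower_of_polar_angle x y :
  (x, y) != (0, 0) -> pi < polar_angle x y -> y < 0.
Proof.
move=> xy_neq0 pi_lt; case: (ltrgtP y 0) => // [y_gt0|y0].
  by have /andP[_] := @polar_angle_upper x y y_gt0; rewrite ltNge ltW.
move: xy_neq0 pi_lt; rewrite y0 xpair_eqE eqxx andbT.
case: (ltrgtP x 0) => // [x_lt0|x_gt0] _; first by rewrite polar_angle_negx ?ltxx.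
by rewrite polar_angle_posx // ltNge ltW ?pi_gt0.
Qed.

Lemma upper_of_polar_angle x y :
  (x, y) != (0, 0) -> 0 < polar_angle x y < pi -> 0 < y.
Proof.
move=> xy_neq0 /andP[gt0 ltpi]; case: (ltrgtP y 0) => // [y_lt0|y0].
  by have := @polar_angle_lower x y y_lt0; rewrite ltNge ltW.
move: xy_neq0 gt0 ltpi; rewrite y0 xpair_eqE eqxx andbT.
case: (ltrgtP x 0) => // [x_lt0|x_gt0] _.
  by rewrite polar_angle_negx ?ltxx.
by rewrite polar_angle_posx ?ltxx.
Qed.

Lemma le_of_acos_le (u v : R) : -1 <= u <= 1 -> -1 <= v <= 1 ->
  acos u <= acos v -> v <= u.
Proof.
move=> u_itv v_itv; apply: contra_leT => lt_uv.
have := @ltr_cos R (acos v) (acos u).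
rewrite !in_itv /= !acos_ge0 // !acos_lepi // !acosK ?in_itv //.
by rewrite ltNge lt_uv => /(_ isT isT) <-.
Qed.

(* For 0 < y, ncos x y = c / sqrt (c^2 + 1) with c = x / y, increasing in c. *)
Lemma ratio_le_of_ncos_le x y x' y' : 0 < y -> 0 < y' ->
  ncos x' y' <= ncos x y -> x' / y' <= x / y.
Proof.
move=> y_gt0 y'_gt0.
set r := Num.sqrt (x ^+ 2 + y ^+ 2); set r' := Num.sqrt (x' ^+ 2 + y' ^+ 2).
have r_gt0 : 0 < r by rewrite sqrtr_gt0; nra.
have r'_gt0 : 0 < r' by rewrite sqrtr_gt0; nra.
have r2 : r ^+ 2 = x ^+ 2 + y ^+ 2 by rewrite sqr_sqrtr // addr_ge0 ?sqr_ge0.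
have r'2 : r' ^+ 2 = x' ^+ 2 + y' ^+ 2 by rewrite sqr_sqrtr // addr_ge0 ?sqr_ge0.
rewrite ler_pdivrMr // mulrAC ler_pdivlMr // => le_cos.
rewrite ler_pdivrMr // mulrAC ler_pdivlMr //.
rewrite leNgt; apply/negP => lt_ratio.
have [x_ge0|x_lt0] := lerP 0 x; have [x'_ge0|x'_lt0] := lerP 0 x'.
- have : (x * y') ^+ 2 < (x' * y) ^+ 2 by rewrite ltr_pXn2r // ?nnegrE; nra.
  have : (x' * r) ^+ 2 <= (x * r') ^+ 2 by rewrite ler_pXn2r // ?nnegrE; nra.
  nra.
- nra.
- nra.
- have : (x' * y) ^+ 2 < (x * y') ^+ 2.
    by rewrite -(sqrrN (x' * y)) -(sqrrN (x * y')) ltr_pXn2r // ?nnegrE; nra.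
  have : (x * r') ^+ 2 <= (x' * r) ^+ 2.
    by rewrite -(sqrrN (x' * r)) -(sqrrN (x * r')) ler_pXn2r // ?nnegrE; nra.
  nra.
Qed.

Lemma polar_angle_le_upper x y x' y' : 0 < y -> 0 < y' ->
  polar_angle x y <= polar_angle x' y' -> x' / y' <= x / y.
Proof.
move=> y_gt0 y'_gt0; rewrite /polar_angle (ltW y_gt0) (ltW y'_gt0) => le_acos.
apply: ratio_le_of_ncos_le => //.
by apply: le_of_acos_le le_acos; apply: ncos_itv; rewrite gt_eqF.
Qed.

Lemma polar_angle_le_lower x y x' y' : y < 0 -> y' < 0 ->
  polar_angle x y <= polar_angle x' y' -> x' / y' <= x / y.
Proof.
move=> y_lt0 y'_lt0; rewrite /polar_angle (lt_geF y_lt0) (lt_geF y'_lt0) lerD2l lerN2.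
move=> /le_of_acos_le; rewrite !ncos_itv ?lt_eqF // => /(_ isT isT).
rewrite -(sqrrN y) -(sqrrN y') => /ratio_le_of_ncos_le.
by rewrite !oppr_gt0 !invrN !mulrN lerN2; apply.
Qed.

End PolarAngle.

Section AffineOrbit.
Variables (R : realType) (m : nat) (h : R) (A B C : nat -> R).
Hypothesis h_ge0 : 0 <= h.
Hypothesis A_gt0 : forall t, (t < m)%N -> 0 < A t.
Hypothesis C_succ : forall t, (t < m)%N -> C t.+1 = A t * C t + h * B t.

Let idstep t := (A t == 1) && (B t == 0).
Let theta t := polar_angle (B t) (1 - A t).
Hypothesis theta_sorted : forall t q, (t < q < m)%N ->
  ~~ idstep t -> ~~ idstep q -> theta t <= theta q.

Let fixpt t := h * (B t / (1 - A t)).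

Lemma vector_neq0 t : ~~ idstep t -> (B t, 1 - A t) != (0, 0).
Proof. by rewrite xpair_eqE subr_eq0 [1 == _]eq_sym andbC. Qed.

Lemma nid_of_step t : (t < m)%N -> C t.+1 != C t -> ~~ idstep t.
Proof.
move=> tm; apply: contra => /andP[/eqP A1 /eqP B0].
by rewrite C_succ // A1 B0 mul1r mulr0 addr0.
Qed.

Lemma theta_le t q : (t <= q < m)%N -> ~~ idstep t -> ~~ idstep q ->
  theta t <= theta q.
Proof.
move=> /andP[]; rewrite leq_eqVlt => /orP[/eqP-> //|lt_tq] qm.
by apply: theta_sorted; rewrite lt_tq.
Qed.

Lemma C_succ_id t : (t < m)%N -> idstep t -> C t.+1 = C t.
Proof.
by move=> tm /andP[/eqP A1 /eqP B0]; rewrite C_succ // A1 B0 mul1r mulr0 addr0.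
Qed.

Lemma C_succ_flat t : (t < m)%N -> A t = 1 -> C t.+1 - C t = h * B t.
Proof. by move=> tm A1; rewrite C_succ // A1 mul1r addrAC subrr add0r. Qed.

Lemma C_succ_delta t : (t < m)%N -> 1 - A t != 0 ->
  C t.+1 - C t = (1 - A t) * (fixpt t - C t).
Proof. by move=> tm y_neq0; rewrite C_succ // /fixpt; field. Qed.

Lemma C_succ_fixpt t : (t < m)%N -> 1 - A t != 0 ->
  C t.+1 - fixpt t = A t * (C t - fixpt t).
Proof. by move=> tm y_neq0; rewrite C_succ // /fixpt; field. Qed.

Lemma fixpt_antitone t q : (t <= q < m)%N ->
  0 < (1 - A t) * (1 - A q) -> fixpt q <= fixpt t.
Proof.
move=> tqm yy; have qm : (q < m)%N by case/andP: tqm.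
have nid_t : ~~ idstep t.
  by apply/negP => /andP[/eqP A1 _]; move: yy; rewrite A1 subrr mul0r ltxx.
have nid_q : ~~ idstep q.
  by apply/negP => /andP[/eqP A1 _]; move: yy; rewrite A1 subrr mulr0 ltxx.
have le_theta : theta t <= theta q by apply: theta_le.
rewrite /fixpt; apply: (ler_wpM2l h_ge0).
case: (ltrgtP (1 - A t) 0) yy => [yt|yt|->]; last by rewrite mul0r ltxx.
  by rewrite nmulr_rgt0 // => yq; apply: polar_angle_le_lower le_theta.
by rewrite pmulr_rgt0 // => yq; apply: polar_angle_le_upper le_theta.
Qed.


Lemma fixpt_le_run u v : (u <= v < m)%N ->
  (forall t q, (u <= t)%N -> (t <= q <= v)%N -> ~~ idstep t -> ~~ idstep q ->
     0 < (1 - A t) * (1 - A q)) ->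
  ~~ idstep u -> ~~ idstep v -> fixpt u <= C u -> fixpt v <= C v.
Proof.
move=> /andP[uv vm] same_half nid_u nid_v start.
suff inv d : (u + d <= v)%N -> forall q, (u + d <= q <= v)%N -> ~~ idstep q ->
    fixpt q <= C (u + d).
  by have := inv (v - u)%N; rewrite subnKC // => /(_ (leqnn v) v); rewrite leqnn; apply.
elim: d => [|d IH] le_dv q /andP[le_q q_v] nid_q.
  rewrite addn0 in le_q *; apply: le_trans start; apply: fixpt_antitone.
    by rewrite le_q (leq_ltn_trans q_v).
  by apply: same_half; rewrite ?le_q.
rewrite addnS in le_dv le_q *; have u_t : (u <= u + d)%N := leq_addr d u.
set t := (u + d)%N in le_dv le_q IH u_t *.
have tm : (t < m)%N by apply: ltn_trans le_dv vm.
have t_v : (t <= v)%N by apply: ltnW.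
have [id_t|nid_t] := boolP (idstep t).
  by rewrite C_succ_id //; apply: (IH t_v q _ nid_q); rewrite (ltnW le_q).
have fix_t : fixpt t <= C t by apply: (IH t_v t _ nid_t); rewrite leqnn.
have yy : 0 < (1 - A t) * (1 - A q) by apply: same_half; rewrite ?(ltnW le_q).
have fix_qt : fixpt q <= fixpt t.
  by apply: fixpt_antitone; rewrite // (ltnW le_q) (leq_ltn_trans q_v).
have yt_neq0 : 1 - A t != 0 by apply: contraTneq yy => ->; rewrite mul0r ltxx.
have : 0 <= C t.+1 - fixpt t.
  by rewrite C_succ_fixpt // mulr_ge0 ?subr_ge0 // ltW ?A_gt0.
by rewrite subr_ge0; apply: le_trans.
Qed.

Lemma flat_descent t : (t < m)%N -> A t = 1 -> C t.+1 < C t -> theta t = pi.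
Proof.
move=> tm A1 desc; have : h * B t < 0 by rewrite -C_succ_flat // subr_lt0.
move=> hB; rewrite /theta A1 subrr polar_angle_negx // ltNge.
by apply/negP => /(mulr_ge0 h_ge0); rewrite leNgt hB.
Qed.

Lemma flat_ascent t : (t < m)%N -> A t = 1 -> C t < C t.+1 -> theta t = 0.
Proof.
move=> tm A1 asc; have : 0 < h * B t by rewrite -C_succ_flat // subr_gt0.
move=> hB; rewrite /theta A1 subrr polar_angle_posx // ltNge.
by apply/negP => /(mulr_ge0_le0 h_ge0); rewrite leNgt hB.
Qed.

Lemma no_ascent_descent_lower j k : (j < k < m)%N -> 1 - A j < 0 ->
  C j < C j.+1 -> C k.+1 < C k -> False.
Proof.
move=> /andP[jk km] yj asc_j desc_k; have jm := ltn_trans jk km.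
have nid_j := @nid_of_step j jm (negbT (gt_eqF asc_j)).
have nid_k := @nid_of_step k km (negbT (lt_eqF desc_k)).
have lower t : (j <= t <= k)%N -> ~~ idstep t -> 1 - A t < 0.
  move=> /andP[jt tk] nid_t.
  apply: lower_of_polar_angle (vector_neq0 nid_t) _.
  apply: lt_le_trans (@polar_angle_lower _ (B j) _ yj) _.
  by apply: theta_le; rewrite // jt (leq_ltn_trans tk).
have fix_j : fixpt j <= C j.
  move: asc_j; rewrite -subr_gt0 C_succ_delta ?ltr0_neq0 // nmulr_rgt0 //.
  by rewrite subr_lt0 => /ltW.
have fix_k : fixpt k <= C k.
  apply: (fixpt_le_run (u := j)) => //; first by rewrite ltnW.
  move=> t q jt /andP[tq qk] nid_t nid_q.
  by rewrite nmulr_rgt0 ?lower // ?jt ?(leq_trans jt tq) ?(leq_trans tq qk).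
have yk : 1 - A k < 0 by apply: lower; rewrite // (ltnW jk) leqnn.
move: desc_k; rewrite -subr_lt0 C_succ_delta ?ltr0_neq0 // nmulr_rlt0 //.
by rewrite subr_gt0 ltNge fix_k.
Qed.

Lemma no_descent_ascent_upper i j : (i < j < m)%N -> 0 < 1 - A j ->
  C i.+1 < C i -> C j < C j.+1 -> False.
Proof.
move=> /andP[ij jm] yj desc_i asc_j; have im := ltn_trans ij jm.
have nid_i := @nid_of_step i im (negbT (lt_eqF desc_i)).
have nid_j := @nid_of_step j jm (negbT (gt_eqF asc_j)).
have /andP[_ theta_j] := @polar_angle_upper _ (B j) _ yj.
have theta_ij : theta i <= theta j by apply: theta_le; rewrite // ltnW.
have yi : 0 < 1 - A i.
  case: (ltrgtP (1 - A i) 0) => [yi|//|yi].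
    have := @polar_angle_lower _ (B i) _ yi; move: theta_ij theta_j.
    by rewrite /theta; lra.
  have A1 : A i = 1 by apply/eqP; rewrite eq_sym -subr_eq0 yi.
  by move: theta_ij; rewrite flat_descent // leNgt theta_j.
have /andP[theta_i _] := @polar_angle_upper _ (B i) _ yi.
have upper t : (i <= t <= j)%N -> ~~ idstep t -> 0 < 1 - A t.
  move=> /andP[it tj] nid_t.
  apply: upper_of_polar_angle (vector_neq0 nid_t) _; apply/andP; split.
    by apply: lt_le_trans theta_i _; apply: theta_le; rewrite // it (leq_ltn_trans tj).
  by apply: le_lt_trans theta_j; apply: theta_le; rewrite // tj.
have fix_i : fixpt i <= C i.
  move: desc_i; rewrite -subr_lt0 C_succ_delta ?lt0r_neq0 // pmulr_rlt0 //.
  by rewrite subr_lt0 => /ltW.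
have fix_j : fixpt j <= C j.
  apply: (fixpt_le_run (u := i)) => //; first by rewrite ltnW.
  move=> t q it /andP[tq qj] nid_t nid_q.
  by rewrite pmulr_rgt0 ?upper // ?it ?(leq_trans it tq) ?(leq_trans tq qj).
move: asc_j; rewrite -subr_gt0 C_succ_delta ?lt0r_neq0 // pmulr_rgt0 //.
by rewrite subr_gt0 ltNge fix_j.
Qed.

Lemma no_descent_ascent_flat i j : (i < j < m)%N -> A j = 1 ->
  C i.+1 < C i -> C j < C j.+1 -> False.
Proof.
move=> /andP[ij jm] Aj desc_i asc_j; have im := ltn_trans ij jm.
have nid_i := @nid_of_step i im (negbT (lt_eqF desc_i)).
have nid_j := @nid_of_step j jm (negbT (gt_eqF asc_j)).
have theta_i_le0 : theta i <= 0.
  by rewrite -(@flat_ascent j jm Aj asc_j); apply: theta_le; rewrite // ltnW.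
suff : 0 < theta i by rewrite ltNge theta_i_le0.
case: (ltrgtP (1 - A i) 0) => [yi|yi|yi].
- by have := @pi_gt0 R; have := @polar_angle_lower _ (B i) _ yi; rewrite /theta; lra.
- by have /andP[] := @polar_angle_upper _ (B i) _ yi.
- have A1 : A i = 1 by apply/eqP; rewrite eq_sym -subr_eq0 yi.
  by rewrite flat_descent // pi_gt0.
Qed.

Lemma no_descent_ascent_descent i j k : (i < j < k)%N -> (k < m)%N ->
  ~ [/\ C i.+1 < C i, C j < C j.+1 & C k.+1 < C k].
Proof.
move=> /andP[ij jk] km [desc_i asc_j desc_k]; have jm := ltn_trans jk km.
case: (ltrgtP (1 - A j) 0) => [yj|yj|yj].
- by apply: (no_ascent_descent_lower (j := j) (k := k)); rewrite ?jk.
- by apply: (no_descent_ascent_upper (i := i) (j := j)); rewrite ?ij.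
- have Aj : A j = 1 by apply/eqP; rewrite eq_sym -subr_eq0 yj.
  by apply: (no_descent_ascent_flat (i := i) (j := j)); rewrite ?ij.
Qed.

End AffineOrbit.

Definition periodic_unimodal (T : Type) (le : T -> T -> Prop) (m : nat)
    (x : nat -> T) : Prop :=
  exists k j : nat, [/\ (j < m)%N,
    (forall i, (i < j)%N -> le (x (k + i)%N) (x (k + i).+1)) &
    (forall i, (j <= i < m)%N -> le (x (k + i).+1) (x (k + i)%N))].

Lemma periodic_unimodal_map (T U : Type) (le : T -> T -> Prop)
    (le' : U -> U -> Prop) m (x : nat -> T) (y : nat -> U) :
  (forall u v, le (x u) (x v) -> le' (y u) (y v)) ->
  periodic_unimodal le m x -> periodic_unimodal le' m y.
Proof.
move=> le_xy [k [j [jm up down]]]; exists k, j.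
by split=> // i hi; apply: le_xy; [apply: up | apply: down].
Qed.

Lemma periodic_unimodal_shift (T : Type) (le : T -> T -> Prop) m (x : nat -> T) r :
  periodic_unimodal le m (fun i => x (r + i)%N) -> periodic_unimodal le m x.
Proof.
move=> [k [j [jm up down]]]; exists (r + k)%N, j.
by split=> // i hi; rewrite -!addnA -(addnS r); [apply: up | apply: down].
Qed.

Lemma cyc_unimodal_of_periodic (T : Type) (le : T -> T -> Prop) m (y : nat -> T) :
  (0 < m)%N -> periodic_unimodal le m (fun i => y (i %% m)%N) -> cyc_unimodal le m y.
Proof.
move=> m_gt0 [k [j [jm up down]]]; exists (k %% m)%N, j.
by split; rewrite ?ltn_mod // => i hi; rewrite -(addnS (k %% m)) !modnDml addnS;
  [apply: up | apply: down].
Qed.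

Section PeriodicUnimodal.
Variables (d : Order.disp_t) (T : orderType d) (m : nat) (x : nat -> T).
Hypothesis x_periodic : forall i, x (i + m)%N = x i.
Local Open Scope order_scope.

Let wrap u : (m <= u)%N -> x u = x (u - m).
Proof. by move=> mu; rewrite -[in LHS](subnK mu) x_periodic. Qed.

Lemma ascent_cycle_descent k :
  (forall i, (i < m)%N -> x (k + i)%N <= x (k + i).+1) ->
  forall i, (i < m)%N -> x (k + i).+1 <= x (k + i)%N.
Proof.
move=> up.
have mono u v : (u <= v <= m)%N -> x (k + u)%N <= x (k + v)%N.
  elim: v => [|v IH] /andP[uv vm]; first by rewrite leqn0 in uv; rewrite (eqP uv).
  case: (ltngtP u v.+1) uv => // [uv|-> //] _.
  by apply: le_trans (IH _) _; rewrite ?addnS ?up // -ltnS uv ltnW.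
move=> i im; rewrite -addnS; apply: (@le_trans _ _ (x (k + m)%N)).
  by apply: mono; rewrite im leqnn.
by rewrite x_periodic -[X in x X <= _]addn0; apply: mono; rewrite (ltnW im).
Qed.

Lemma periodic_unimodal_flip :
  periodic_unimodal (fun u v => v <= u) m x ->
  periodic_unimodal (fun u v => u <= v) m x.
Proof.
move=> [k [j [jm down up]]].
have [j0|j_gt0] := posnP j.
  exists k, 0%N; split=> [|//|i /andP[_ im]]; first by rewrite -j0.
  by apply: ascent_cycle_descent im => i' i'm; apply: up; rewrite j0 i'm.
exists (k + j)%N, (m - j)%N; split=> [|i ij|i /andP[ji im]].
- lia.
- by rewrite -addnA; apply: up; lia.
- have -> : x (k + j + i)%N = x (k + (j + i - m))%N by rewrite wrap; [congr x | ]; lia.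
  have -> : x (k + j + i).+1 = x (k + (j + i - m)).+1.
    by rewrite wrap; [congr x | ]; lia.
  by apply: down; lia.
Qed.

Lemma periodic_unimodal_of_runs i0 j0 : (i0 < j0 < m)%N ->
  (forall i, (i < i0)%N -> x i <= x i.+1) ->
  (forall i, (i0 <= i < j0)%N -> x i.+1 <= x i) ->
  (forall i, (j0 <= i < m)%N -> x i <= x i.+1) ->
  periodic_unimodal (fun u v => u <= v) m x.
Proof.
move=> /andP[i0j0 j0m] asc_before desc_mid asc_after.
have wrap_le u v : (m <= u)%N -> (m <= v)%N -> x (u - m) <= x (v - m) -> x u <= x v.
  by move=> mu mv; rewrite (wrap mu) (wrap mv).
exists j0, (m - j0 + i0)%N; split=> [|i hi|i /andP[hi im]].
- lia.
- have [lt_m|ge_m] := ltnP (j0 + i) m; first by apply: asc_after; lia.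
  apply: wrap_le; try lia.
  by rewrite subSn //; apply: asc_before; lia.
- apply: wrap_le; try lia.
  by rewrite subSn; [apply: desc_mid | ]; lia.
Qed.

Lemma periodic_unimodal_of_pattern_free : (0 < m)%N ->
  (forall i j k, (i < j < k)%N -> (k < m)%N ->
     ~ [/\ x i.+1 < x i, x j < x j.+1 & x k.+1 < x k]) ->
  periodic_unimodal (fun u v => u <= v) m x.
Proof.
move=> m_gt0 no_pattern.
have [/existsP[i1 desc_i1]|no_desc] := boolP [exists i : 'I_m, x i.+1 < x i];
  last first.
  exists 0%N, 0%N; split=> // i /andP[_ im]; apply: ascent_cycle_descent im.
  move=> i' i'm; rewrite leNgt; apply: contra no_desc => desc.
  by apply/existsP; exists (Ordinal i'm).
have ex_desc : exists i, (i < m)%N && (x i.+1 < x i) by exists i1; rewrite ltn_ord.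
case: (ex_minnP ex_desc) => i0 /andP[i0m desc_i0] min_i0.
have asc_before i : (i < i0)%N -> x i <= x i.+1.
  move=> ii0; rewrite leNgt; apply/negP => desc.
  by have := min_i0 i; rewrite (ltn_trans ii0 i0m) desc leqNgt ii0 => /(_ isT).
have [/existsP[j1 /andP[i0j1 asc_j1]]|no_asc] :=
  boolP [exists j : 'I_m, (i0 < j)%N && (x j < x j.+1)]; last first.
  exists 0%N, i0; split=> // i /andP[i0i im].
  case: (ltngtP i0 i) i0i => // [lt_i0i|<-] _; last exact: ltW.
  rewrite leNgt; apply: contra no_asc => asc.
  by apply/existsP; exists (Ordinal im); rewrite lt_i0i.
have ex_asc : exists j, [&& (j < m)%N, (i0 < j)%N & x j < x j.+1].
  by exists j1; rewrite ltn_ord i0j1.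
case: (ex_minnP ex_asc) => j0 /and3P[j0m i0j0 asc_j0] min_j0.
apply: (periodic_unimodal_of_runs (i0 := i0) (j0 := j0)) => // [|i|i].
- by rewrite i0j0.
- move=> /andP[]; case: (ltngtP i0 i) => // [lt_i0i|<-] _ ij0; last exact: ltW.
  rewrite leNgt; apply/negP => asc.
  by have := min_j0 i; rewrite (ltn_trans ij0 j0m) lt_i0i asc leqNgt ij0 => /(_ isT).
- move=> /andP[]; case: (ltngtP j0 i) => // [lt_j0i|<-] _ im; last exact: ltW.
  by rewrite leNgt; apply/negP => desc; apply: (no_pattern i0 j0 i); rewrite ?i0j0.
Qed.

End PeriodicUnimodal.

Section RotateFilter.
Variables (T : Type) (P : pred T).

Lemma filter_rot q (s : seq T) :
  filter P (rot q s) = rot (count P (take q s)) (filter P s).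
Proof.
have -> : filter P s = filter P (take q s) ++ filter P (drop q s).
  by rewrite -filter_cat cat_take_drop.
by rewrite -size_filter rot_size_cat /rot filter_cat.
Qed.

Lemma count_take_onto (s : seq T) k : (k <= count P s)%N ->
  exists2 q, (q <= size s)%N & count P (take q s) = k.
Proof.
elim: s k => [|y s IH] [|k] //= hk; try by exists 0%N.
case: (boolP (P y)) hk => Py hk.
  have [|q qs cq] := IH k; first exact: hk.
  by exists q.+1; rewrite //= Py cq.
have [|q qs cq] := IH k.+1; first exact: hk.
by exists q.+1; rewrite //= (negbTE Py) cq.
Qed.

Lemma exists_rot_filter (s : seq T) k :
  exists2 q, (q <= size s)%N & filter P (rot q s) = rot k (filter P s).
Proof.
have [le_k|lt_k] := leqP (size (filter P s)) k.
  by exists 0%N; rewrite ?rot0 ?rot_oversize.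
have [|q qs cq] := @count_take_onto s k; first by rewrite -size_filter ltnW.
by exists q; rewrite // filter_rot cq.
Qed.

End RotateFilter.

Lemma rot_rot_mod (T : Type) (s : seq T) r t : (r <= size s)%N ->
  rot (t %% size s) (rot r s) = rot ((r + t) %% size s) s.
Proof.
case: (posnP (size s)) => [/size0nil -> //|s_gt0] rs.
have tm : (t %% size s <= size s)%N by rewrite ltnW // ltn_mod.
rewrite rot_add_mod // -modnDmr [(r + _)%N]addnC.
set u := (t %% size s + r)%N.
have u_lt : (u < size s + size s)%N by rewrite /u -(ltn_mod t) in s_gt0; lia.
case: leqP => [le_u|lt_u].
  have [lt|eq] : (u < size s)%N \/ u = size s by lia.
    by rewrite modn_small.
  by rewrite eq modnn rot_size rot0.
have -> : u = (u - size s + size s)%N by rewrite subnK // ltnW.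
by rewrite modnDr modn_small ?addnK //; lia.
Qed.

Lemma sorted_filter_nth (d : Order.disp_t) (U : porderType d) (T : eqType)
    (P : pred T) (f : T -> U) (s : seq T) x0 i j :
  sorted <=%O [seq f x | x <- s & P x] -> (i < j)%N -> (j < size s)%N ->
  P (nth x0 s i) -> P (nth x0 s j) -> (f (nth x0 s i) <= f (nth x0 s j))%O.
Proof.
elim: s i j => [|y s IH] //= [|i] [|j] // sorted_s ij js Pi Pj /=.
  move: sorted_s; rewrite Pi /= => /(order_path_min le_trans) /allP; apply.
  by apply: map_f; rewrite mem_filter Pj mem_nth.
by apply: IH; move: sorted_s; case: (P y) => //= /path_sorted.
Qed.

Section LinearComposites.
Variables (R : realType) (n : nat) (a b : 'I_n -> R).

Lemma comp_seq_affine s x :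
  comp_seq a b s x = (\prod_(i <- s) a i) * x + comp_seq a b s 0.
Proof.
rewrite /comp_seq; elim: s x => [|y s IH] x /=; first by rewrite big_nil mul1r addr0.
by rewrite IH [X in _ = _ + X]IH big_cons /linf; ring.
Qed.

Lemma prod_rot q s : \prod_(i <- rot q s) a i = \prod_(i <- s) a i.
Proof. by apply: perm_big; rewrite perm_rot. Qed.

(* With rot q s = y :: t and rot q.+1 s = rcons t y, both composites factor
   through the composite of t. *)
Lemma comp_seq_rot_succ s q i0 : (q < size s)%N ->
  comp_seq a b (rot q.+1 s) 0 = a (nth i0 s q) * comp_seq a b (rot q s) 0
    + (1 - \prod_(i <- s) a i) * b (nth i0 s q).
Proof.
move=> qs; set y := nth i0 s q; set t := drop q.+1 s ++ take q s.
have rot_q : rot q s = y :: t by rewrite /rot (drop_nth i0).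
rewrite rotS // -(prod_rot q) rot_q rot1_cons big_cons.
rewrite {1}/comp_seq foldl_rcons -/(comp_seq a b t 0) /= /linf mulr0 add0r.
rewrite (comp_seq_affine t (b y)); ring.
Qed.

Lemma fle_comp_seq_rot s u v :
  comp_seq a b (rot u s) 0 <= comp_seq a b (rot v s) 0 ->
  fle (comp_seq a b (rot u s)) (comp_seq a b (rot v s)).
Proof.
by move=> le0 x; rewrite comp_seq_affine [X in _ <= X]comp_seq_affine !prod_rot lerD2l.
Qed.

Lemma comp_seq_rot_unimodal s : (0 < size s)%N -> (forall i, 0 < a i) ->
  sorted <=%R [seq theta a b i | i <- s & ~~ identical a b i] ->
  periodic_unimodal (fun u v => u <= v) (size s)
    (fun t => comp_seq a b (rot (t %% size s) s) 0).
Proof.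
move=> s_gt0 a_gt0 sorted_s; set m := size s.
have i0 : 'I_n by case: s s_gt0 {sorted_s m} => // i0.
pose A t := a (nth i0 s t); pose B t := b (nth i0 s t).
pose C t := comp_seq a b (rot (t %% m) s) 0; set h := 1 - \prod_(i <- s) a i.
change (periodic_unimodal (fun u v : R => u <= v) m C).
have C_periodic t : C (t + m)%N = C t by rewrite /C modnDr.
have C_succ t : (t < m)%N -> C t.+1 = A t * C t + h * B t.
  move=> tm; rewrite /C; have -> : rot (t.+1 %% m) s = rot t.+1 s.
    have [lt|->] : (t.+1 < m)%N \/ t.+1 = m by lia.
      by rewrite modn_small.
    by rewrite modnn rot0 rot_size.
  by rewrite modn_small // (comp_seq_rot_succ i0).
have theta_sorted t q : (t < q < m)%N ->
    ~~ ((A t == 1) && (B t == 0)) -> ~~ ((A q == 1) && (B q == 0)) ->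
    polar_angle (B t) (1 - A t) <= polar_angle (B q) (1 - A q).
  by move=> /andP[tq qm]; apply: (sorted_filter_nth (x0 := i0) sorted_s tq qm).
have A_gt0 t : (t < m)%N -> 0 < A t by move=> _; apply: a_gt0.
have [h_ge0|h_lt0] := lerP 0 h.
  apply: periodic_unimodal_of_pattern_free => // i j k ijk km.
  exact: (no_descent_ascent_descent h_ge0 A_gt0 C_succ theta_sorted).
apply: (periodic_unimodal_flip C_periodic).
apply: (periodic_unimodal_map (le := fun u v : R => u <= v) (x := fun t => - C t)).
  by move=> u v /=; rewrite lerN2.
apply: periodic_unimodal_of_pattern_free => [t|//|i j k ijk km].
  by rewrite C_periodic.
have Nh_ge0 : 0 <= - h by rewrite oppr_ge0 ltW.
have NC_succ t : (t < m)%N -> - C t.+1 = A t * - C t + - h * B t.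
  by move=> tm; rewrite C_succ //; ring.
exact: (no_descent_ascent_descent Nh_ge0 A_gt0 NC_succ theta_sorted).
Qed.

End LinearComposites.

Theorem mainTheorem11 (R : realType) (n : nat) (a b : 'I_n -> R) (tau : 'S_n) :
  (0 < n)%N ->
  (forall i, monotone a i) ->
  counterclockwise a b tau ->
  cyc_unimodal (@fle R) n (fun k => fshift a b tau k).
Proof.
move=> n_gt0 a_gt0 [k sorted_k].
set p := perm_seq tau; have size_p : size p = n by rewrite size_map size_enum_ord.
have [r r_le filter_r] := exists_rot_filter (fun i => ~~ identical a b i) p k.
rewrite size_p in r_le.
have := @comp_seq_rot_unimodal R n a b (rot r p).
rewrite size_rot size_p filter_r map_rot => /(_ n_gt0 a_gt0 sorted_k) unimodal_r.
apply: cyc_unimodal_of_periodic n_gt0 _; apply: (periodic_unimodal_shift (r := r)).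
apply: periodic_unimodal_map unimodal_r => u v.
have := @rot_rot_mod _ p r; rewrite size_p => rot_mod.
by rewrite !rot_mod //; apply: fle_comp_seq_rot.
Qed.
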